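(* Let $A\in\mathbb C^{n\times N}$, $x_0\in\mathbb C^n$ with $\|x_0\|=1$, $b=|A^*x_0|$, $I\subset\{1,\dots,N\}$, and let $x_{\rm null}$ be a unit vector minimizing $\|A_I^*x\|$ over unit vectors $x\in\mathbb C^n$, with phase chosen so that $x_0^*x_{\rm null}\ge0$. Then there exists $x_\perp\in\mathbb C^n$ with $x_\perp^*x_0=0$ and $\|x_\perp\|=1$ such that $$\tfrac14\|x_0x_0^*-x_{\rm null}x_{\rm null}^*\|^2\le\frac{\|b_I\|^2}{\|A_I^*x_\perp\|^2}$$ (with the right side interpreted as $+\infty$ if $A_I^*x_\perp=0$).
   Context: $A_I$ is the submatrix of $A$ consisting of the columns indexed by $I$, $b_I=(b(i))_{i\in I}=|A_I^*x_0|$, and the norm on the left is the Frobenius norm. *)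

(* Complex scalars: an arbitrary numClosedFieldType C
   (e.g. algC); conjugation z^*, and the partial order 0 <= z means z real, >= 0. *)
From HB Require Import structures.
From mathcomp Require Import all_boot all_order all_algebra.
Set Implicit Arguments. Unset Strict Implicit. Unset Printing Implicit Defensive.
Import Order.TTheory GRing.Theory Num.Theory.
Local Open Scope ring_scope.

Definition adjmx (C : numClosedFieldType) m n (M : 'M[C]_(m, n)) : 'M[C]_(n, m) :=
  (map_mx Num.conj M)^T.

Definition fro2 (C : numClosedFieldType) m n (M : 'M[C]_(m, n)) : C :=
  \sum_(i < m) \sum_(j < n) `|M i j| ^+ 2.

(* A_I : the submatrix of A consisting of the columns indexed by I
   (in increasing order of indices) *)
Definition colsubI (C : numClosedFieldType) n N (A : 'M[C]_(n, N)) (I : {set 'I_N})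
  : 'M[C]_(n, #|I|) := colsub (fun k : 'I_#|I| => enum_val k) A.

Definition absmx (C : numClosedFieldType) m n (M : 'M[C]_(m, n)) : 'M[C]_(m, n) :=
  map_mx (fun z => `|z|) M.

(** Let [W := A_I^*] and [c := x0^* xnull].  A minimiser [xnull] of [|W x|] on
    the unit sphere is an eigenvector of [W^* W] for its least eigenvalue [l],
    so [<W xnull, W y> = l <xnull, y>] for every [y].  The residual
    [z := xnull - c x0] is orthogonal to [x0], has [|z|^2 = 1 - |c|^2], and by
    the eigenvector relation
    [|W z|^2 = (1 - |c|^2) l + |c|^2 (|W x0|^2 - l) <= |W x0|^2 = |b_I|^2].
    Since [|x0 x0^* - xnull xnull^*|^2 = 2 (1 - |c|^2)], normalising [z] gives
    [x_perp]; when [c] has modulus one, any unit vector orthogonal to [x0]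
    works because the left-hand side vanishes. *)

From HB Require Import structures.
From mathcomp Require Import all_boot all_order all_algebra.
From mathcomp Require Import ring.
Set Implicit Arguments. Unset Strict Implicit. Unset Printing Implicit Defensive.
Import Order.TTheory GRing.Theory Num.Theory.
Local Open Scope ring_scope.

Section HermitianProduct.
Variables (C : numClosedFieldType) (m : nat).
Implicit Types (u v w : 'cV[C]_m) (a : C).

Definition dotv u v : C := \sum_i (u i 0)^* * v i 0.

Lemma adjmx_mul_dotv u v : (adjmx u *m v) 0 0 = dotv u v.
Proof. by rewrite mxE; apply: eq_bigr => i _; rewrite !mxE. Qed.

Lemma fro2_dotv v : fro2 v = dotv v v.
Proof. by apply: eq_bigr => i _; rewrite big_ord1 normCK mulrC. Qed.

Lemma dotvC u v : dotv v u = (dotv u v)^*.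
Proof.
by rewrite rmorph_sum; apply: eq_bigr => i _; rewrite rmorphM /= conjCK mulrC.
Qed.

Lemma dotvDr u v w : dotv u (v + w) = dotv u v + dotv u w.
Proof. by rewrite -big_split; apply: eq_bigr => i _; rewrite mxE mulrDr. Qed.

Lemma dotvZr u v a : dotv u (a *: v) = a * dotv u v.
Proof. by rewrite mulr_sumr; apply: eq_bigr => i _; rewrite mxE mulrCA. Qed.

Lemma dotvNr u v : dotv u (- v) = - dotv u v.
Proof. by rewrite -scaleN1r dotvZr mulN1r. Qed.

Lemma dotvDl u v w : dotv (v + w) u = dotv v u + dotv w u.
Proof. by rewrite dotvC dotvDr rmorphD /= -!dotvC. Qed.

Lemma dotvZl u v a : dotv (a *: v) u = a^* * dotv v u.
Proof. by rewrite dotvC dotvZr rmorphM /= -!dotvC. Qed.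

Lemma dotvNl u v : dotv (- v) u = - dotv v u.
Proof. by rewrite dotvC dotvNr rmorphN /= -!dotvC. Qed.

Definition dotvE := (dotvDl, dotvDr, dotvNl, dotvNr, dotvZl, dotvZr).

Lemma dotv_delta i v : dotv (delta_mx i 0) v = v i 0.
Proof.
rewrite /dotv (bigD1 i) //= big1 => [|j ji]; first by rewrite !mxE !eqxx conjC1 mul1r addr0.
by rewrite !mxE (negbTE ji) conjC0 mul0r.
Qed.

End HermitianProduct.

Section Frobenius.
Variables (C : numClosedFieldType) (m n : nat).
Implicit Types (M : 'M[C]_(m, n)) (a r : C).

Lemma fro2_ge0 M : 0 <= fro2 M.
Proof. by do 2!apply: sumr_ge0 => ? _; apply: exprn_ge0. Qed.

Lemma fro2_0 : fro2 (0 : 'M[C]_(m, n)) = 0.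
Proof. by apply: big1 => i _; apply: big1 => j _; rewrite mxE normr0 expr0n. Qed.

Lemma fro2_eq0 M : (fro2 M == 0) = (M == 0).
Proof.
apply/idP/eqP => [/eqP M0|->]; last by rewrite fro2_0.
have sq_ge0 (z : C) : 0 <= `|z| ^+ 2 by exact: exprn_ge0.
have row0 := psumr_eq0P (fun i _ => sumr_ge0 _ (fun j _ => sq_ge0 (M i j))) M0.
apply/matrixP => i j; rewrite mxE; apply/eqP.
have /(_ j isT)/eqP := psumr_eq0P (fun j _ => sq_ge0 (M i j)) (row0 i isT).
by rewrite /= sqrf_eq0 normr_eq0.
Qed.

Lemma fro2_gt0 M : (0 < fro2 M) = (M != 0).
Proof. by rewrite lt_def fro2_eq0 fro2_ge0 andbT. Qed.

Lemma fro2Z a M : fro2 (a *: M) = `|a| ^+ 2 * fro2 M.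
Proof.
rewrite mulr_sumr; apply: eq_bigr => i _; rewrite mulr_sumr.
by apply: eq_bigr => j _; rewrite mxE normrM exprMn.
Qed.

Lemma fro2_scaleV_sqrtC r M : 0 <= r -> fro2 ((sqrtC r)^-1 *: M) = r^-1 * fro2 M.
Proof. by move=> r0; rewrite fro2Z normfV ger0_norm ?sqrtC_ge0 // exprVn sqrtCK. Qed.

Lemma fro2_normalize M : M != 0 -> fro2 ((sqrtC (fro2 M))^-1 *: M) = 1.
Proof.
by rewrite -fro2_gt0 => M0; rewrite fro2_scaleV_sqrtC ?mulVf ?gt_eqF ?ltW.
Qed.

End Frobenius.

Lemma fro2_sub_rank1 (C : numClosedFieldType) m (u v : 'cV[C]_m) :
  fro2 (u *m adjmx u - v *m adjmx v) =
  fro2 u ^+ 2 + fro2 v ^+ 2 - 2 * `|dotv u v| ^+ 2.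
Proof.
have -> : 2 * `|dotv u v| ^+ 2 = dotv v u * dotv u v + dotv u v * dotv v u.
  by rewrite normCK -dotvC mulr2n mulrDl mul1r mulrC.
rewrite opprD addrA !expr2 !fro2_dotv /dotv !big_distrlr /= -big_split /= -!sumrB.
apply: eq_bigr => i _; rewrite -big_split /= -!sumrB; apply: eq_bigr => j _.
rewrite !mxE !big_ord1 !mxE normCK !rmorphB /= !rmorphM /= !conjCK.
ring.
Qed.

Lemma exists_unit_orthogonal (C : numClosedFieldType) m (x : 'cV[C]_m) :
  (2 <= m)%N -> exists y : 'cV[C]_m, dotv y x = 0 /\ fro2 y = 1.
Proof.
move=> m2; pose i0 : 'I_m := Ordinal (ltnW m2); pose i1 : 'I_m := Ordinal m2.
have [xi0_0|xi0_neq0] := eqVneq (x i0 0) 0.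
  by exists (delta_mx i0 0); rewrite fro2_dotv !dotv_delta xi0_0 mxE !eqxx.
pose y : 'cV[C]_m := (x i1 0)^* *: delta_mx i0 0 - (x i0 0)^* *: delta_mx i1 0.
have y_orth : dotv y x = 0 by rewrite !dotvE !dotv_delta !conjCK mulrC subrr.
have y_neq0 : y != 0.
  apply: contra_neq xi0_neq0 => /matrixP/(_ i1 0).
  by rewrite !mxE !eqxx /= mulr0 mulr1 sub0r => /eqP; rewrite oppr_eq0 conjC_eq0 => /eqP.
exists ((sqrtC (fro2 y))^-1 *: y); split; last exact: fro2_normalize.
by rewrite dotvZl y_orth mulr0.
Qed.

Section SphereMinimizer.
Variables (C : numClosedFieldType) (m k : nat) (W : 'M[C]_(k, m)) (x : 'cV[C]_m).
Hypothesis x_unit : fro2 x = 1.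
Hypothesis x_min : forall v : 'cV[C]_m, fro2 v = 1 -> fro2 (W *m x) <= fro2 (W *m v).

Let l := fro2 (W *m x).

Lemma minimizer_rayleigh (v : 'cV[C]_m) : l * fro2 v <= fro2 (W *m v).
Proof.
have [->|v0] := eqVneq v 0; first by rewrite mulmx0 !fro2_0 mulr0.
have := x_min (fro2_normalize v0).
by rewrite -scalemxAr fro2_scaleV_sqrtC ?fro2_ge0 // mulrC -ler_pdivlMr ?fro2_gt0.
Qed.

(* The form [|W v|^2 - l |v|^2] is nonnegative and vanishes at [x], so its
   polar form [B] at [x] must vanish: evaluating it at [x - eps B^* y] gives
   [eps |B|^2 (eps K - 2) >= 0], impossible for small [eps > 0] unless [B = 0]. *)
Lemma minimizer_eigen (y : 'cV[C]_m) : dotv (W *m x) (W *m y) = l * dotv x y.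
Proof.
apply/eqP; rewrite -subr_eq0; set B := _ - _; apply/eqP.
have [//|B0] := eqVneq B 0; exfalso.
set K := fro2 (W *m y) - l * fro2 y.
set eps := (`|K| + 1)^-1.
have eps_gt0 : 0 < eps by rewrite invr_gt0 ltr_wpDl.
have perturbed : 0 <= eps * (B * B^*) * (eps * K - 2).
  have := minimizer_rayleigh (x - (eps * B^*) *: y).
  rewrite mulmxBr -scalemxAr -subr_ge0 !fro2_dotv !dotvE -!fro2_dotv -/l x_unit.
  rewrite rmorphM /= conjCK (geC0_conj (ltW eps_gt0)).
  rewrite [dotv y x]dotvC [dotv (W *m y) _]dotvC.
  have -> : dotv (W *m x) (W *m y) = B + l * dotv x y by rewrite /B subrK.
  rewrite [(B + _)^*]rmorphD /= [(l * _)^*]rmorphM /= (geC0_conj (fro2_ge0 _)).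
  set E := (X in 0 <= X -> _); suff -> : E = eps * (B * B^*) * (eps * K - 2) by [].
  by rewrite /E /K -/l; ring.
move: perturbed.
rewrite -normCK pmulr_rge0 ?mulr_gt0 ?exprn_gt0 ?normr_gt0 // subr_ge0.
have K_real : K \is Num.real by rewrite rpredB ?rpredM ?ger0_real ?fro2_ge0.
have epsK_lt1 : eps * K < 1.
  apply: le_lt_trans (_ : eps * `|K| < 1).
    by rewrite ler_pM2l ?real_ler_norm.
  by rewrite mulrC ltr_pdivrMr ?mul1r ?ltrDl ?ltr01 // ltr_wpDl.
by move=> /le_lt_trans/(_ epsK_lt1); rewrite ltrn1.
Qed.

Variable x0 : 'cV[C]_m.
Hypothesis x0_unit : fro2 x0 = 1.

Let c := dotv x0 x.
Let z := x - c *: x0.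

Lemma residual_orthogonal : dotv z x0 = 0.
Proof. by rewrite /z !dotvE -fro2_dotv x0_unit mulr1 dotvC subrr. Qed.

Lemma fro2_residual : fro2 z = 1 - `|c| ^+ 2.
Proof.
rewrite fro2_dotv /z !dotvE -!fro2_dotv x_unit x0_unit [dotv x x0]dotvC normCK.
rewrite -/c; ring.
Qed.

Lemma fro2_mulmx_residual_le : fro2 (W *m z) <= fro2 (W *m x0).
Proof.
set a := fro2 (W *m x0).
have Wx_Wx0 := minimizer_eigen x0.
have Wx0_Wx : dotv (W *m x0) (W *m x) = l * c.
  by rewrite dotvC Wx_Wx0 rmorphM /= (geC0_conj (fro2_ge0 _)) -dotvC.
rewrite -subr_ge0 fro2_dotv /z mulmxBr -scalemxAr !dotvE -!fro2_dotv Wx_Wx0 Wx0_Wx -/a.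
set E := (X in 0 <= X); suff -> : E = (1 - `|c| ^+ 2) * (a - l) + `|c| ^+ 2 * l.
  rewrite -fro2_residual addr_ge0 ?mulr_ge0 ?exprn_ge0 ?fro2_ge0 //.
  by rewrite subr_ge0 x_min.
by rewrite /E -/l [dotv x x0]dotvC normCK -/c; ring.
Qed.

Lemma projector_dist_le_ratio : (2 <= m)%N ->
  exists xp : 'cV[C]_m, dotv xp x0 = 0 /\ fro2 xp = 1 /\
    (W *m xp != 0 -> 4^-1 * fro2 (x0 *m adjmx x0 - x *m adjmx x)
       <= fro2 (W *m x0) / fro2 (W *m xp)).
Proof.
move=> m2; have -> : fro2 (x0 *m adjmx x0 - x *m adjmx x) = 2 * fro2 z.
  by rewrite fro2_sub_rank1 x0_unit x_unit fro2_residual expr1n; ring.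
have [z0|z_neq0] := eqVneq z 0.
  have [y [y_orth y_unit]] := exists_unit_orthogonal x0 m2.
  exists y; split=> //; split=> // _.
  by rewrite z0 fro2_0 !mulr0 divr_ge0 ?fro2_ge0.
set s := fro2 z.
have s_gt0 : 0 < s by rewrite fro2_gt0.
exists ((sqrtC s)^-1 *: z); split; first by rewrite dotvZl residual_orthogonal mulr0.
split; first exact: fro2_normalize.
rewrite -scalemxAr fro2_scaleV_sqrtC ?(ltW s_gt0) // => Wz_neq0.
have Wz_gt0 : 0 < fro2 (W *m z).
  by rewrite fro2_gt0; apply: contraNneq Wz_neq0 => ->; rewrite scaler0.
rewrite ler_pdivlMr ?mulr_gt0 ?invr_gt0 //.
have -> : 4^-1 * (2 * s) * (s^-1 * fro2 (W *m z)) = 2^-1 * fro2 (W *m z).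
  by field; rewrite gt_eqF.
apply: le_trans fro2_mulmx_residual_le.
by rewrite ler_piMl ?(ltW Wz_gt0) // invf_le1 ?ler1n ?ltr0n.
Qed.

End SphereMinimizer.

Theorem propositionA1 (C : numClosedFieldType) (n N : nat) (hn : (2 <= n)%N)
  (A : 'M[C]_(n, N)) (x0 : 'cV[C]_n) (I : {set 'I_N}) (xnull : 'cV[C]_n) :
  fro2 x0 = 1 ->
  fro2 xnull = 1 ->
  (forall x : 'cV[C]_n, fro2 x = 1 ->
     fro2 (adjmx (colsubI A I) *m xnull) <= fro2 (adjmx (colsubI A I) *m x)) ->
  0 <= (adjmx x0 *m xnull) 0 0 ->
  let b : 'cV[C]_N := absmx (adjmx A *m x0) in
  let bI : 'cV[C]_#|I| := rowsub (fun k : 'I_#|I| => enum_val k) b in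
  exists xperp : 'cV[C]_n,
    adjmx xperp *m x0 = 0 /\ fro2 xperp = 1 /\
    (adjmx (colsubI A I) *m xperp != 0 ->
     4^-1 * fro2 (x0 *m adjmx x0 - xnull *m adjmx xnull)
       <= fro2 bI / fro2 (adjmx (colsubI A I) *m xperp)).
Proof.
move=> x0_unit xnull_unit xnull_min _ b bI.
have [xp [xp_orth [xp_unit xp_bound]]] :=
  projector_dist_le_ratio xnull_unit xnull_min x0_unit hn.
have bI_eq : fro2 bI = fro2 (adjmx (colsubI A I) *m x0).
  apply: eq_bigr => i _; apply: eq_bigr => j _; rewrite !mxE normr_id.
  by congr (`|_| ^+ 2); apply: eq_bigr => l _; rewrite !mxE.
exists xp; rewrite bI_eq; split=> //.
by apply/matrixP => i j; rewrite !ord1 adjmx_mul_dotv xp_orth mxE.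
Qed.
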